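(* Consider the fixed-design additive regression setting, the estimator $\hat g=\sum_{j=1}^p\hat g_j$ and the tuning parameters described in the context. Assume the sub-Gaussian noise condition and the entropy condition hold, and that the empirical compatibility condition holds for some subset $S\subset\{1,\dots,p\}$ and constants $\kappa_0>0$, $\xi_0>1$. Let $\bar g=\sum_{j=1}^p\bar g_j\in\mathcal G$ be arbitrary. Then for any $A_0>(\xi_0+1)/(\xi_0-1)$, with probability at least $1-\epsilon$, $$\mathcal D_n(\hat g,\bar g)\le \xi_1^{-1}\Delta_n(\bar g,S)+2\xi_2^2\kappa_0^{-2}\Big(\sum_{j\in S}\lambda_{nj}^2\Big),$$ where $\xi_1=1-2A_0/\{(\xi_0+1)(A_0-1)\}\in(0,1]$, $\xi_2=(\xi_0+1)(A_0-1)$, $$\mathcal D_n(\hat g,\bar g)=\tfrac12\|\hat g-g^*\|_n^2+\tfrac12\|\hat g-\bar g\|_n^2+(A_0-1)R_n(\hat g-\bar g),$$ $$\Delta_n(\bar g,S)=\tfrac12\|\bar g-g^*\|_n^2+2A_0\Big(\sum_{j=1}^p\rho_{nj}\|\bar g_j\|_{F,j}+\sum_{j\notin S}\lambda_{nj}\|\bar g_j\|_n\Big),$$ and $R_n(\hat g-\bar g)=\sum_{j}\{\rho_{nj}\|\hat g_j-\bar g_j\|_{F,j}+\lambda_{nj}\|\hat g_j-\bar g_j\|_n\}$.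
   Context: Data: $(Y_i,X_i)$, $i=1,\dots,n$, with $Y_i\in\mathbb R$, $X_i\in\mathbb R^d$, $Y_i=g^*(X_i)+\varepsilon_i$, where $g^*:\mathbb R^d\to\mathbb R$ is an arbitrary (not necessarily additive) function. Fixed design: $X_1,\dots,X_n$ are deterministic and probabilities refer to the noise. For $j=1,\dots,p$, $x^{(j)}$ is a fixed sub-vector of coordinates of $x\in\mathbb R^d$, $\mathcal G_j$ is a vector space of real functions of $x^{(j)}$ with a semi-norm $\|\cdot\|_{F,j}$, and $\mathcal G=\{g(x)=\sum_{j=1}^pg_j(x^{(j)}):g_j\in\mathcal G_j\}$; every $g\in\mathcal G$ is considered together with a decomposition $g=\sum_jg_j$, and component-wise quantities refer to it. Empirical norm and inner product: $\|f\|_n^2=n^{-1}\sum_{i=1}^nf(X_i)^2$, $\|Y-g\|_n^2=n^{-1}\sum_i\{Y_i-g(X_i)\}^2$, $\langle\varepsilon,f\rangle_n=n^{-1}\sum_i\varepsilon_if(X_i)$. $H(u,\mathcal F,\|\cdot\|)$ denotes the log of the minimal number of $\|\cdot\|$-balls of radius $u$ covering $\mathcal F$. Sub-Gaussian noise condition: $\varepsilon_1,\dots,\varepsilon_n$ are independent with mean zero and $\max_i D_0E\exp(\varepsilon_i^2/D_0)\le D_1$ for constants $D_0,D_1>0$. $C_1=C_1(D_0,D_1)>0$ is a constant depending only on $(D_0,D_1)$ such that for every $\delta>0$ and every class $\mathcal F$ with $\sup_{f\in\mathcal F}\|f\|_n\le\delta$ and every $\psi\ge\int_0^\delta H^{1/2}(u,\mathcal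 F,\|\cdot\|_n)du$, one has $P\{\sup_{f\in\mathcal F}|\langle\varepsilon,f\rangle_n|/C_1>n^{-1/2}\psi+\delta\sqrt{t/n}\}\le e^{-t}$ for all $t>0$. Entropy condition: for each $j$, with $\mathcal G_j(\delta)=\{f\in\mathcal G_j:\|f\|_{F,j}+\|f\|_n/\delta\le1\}$, a function $\psi_{nj}$ satisfies $\psi_{nj}(\delta)\ge\int_0^\delta H^{1/2}(u,\mathcal G_j(\delta),\|\cdot\|_n)\,du$ for $0<\delta\le1$. Tuning and estimator: constants $0<\epsilon<1$ and $0<w_{nj}\le1$; $\gamma_{nj}=n^{-1/2}\psi_{nj}(w_{nj})/w_{nj}$; $\lambda_{nj}=C_1\{\gamma_{nj}+\sqrt{\log(p/\epsilon)/n}\}$; $\rho_{nj}=\lambda_{nj}w_{nj}$; $R_n(g)=\sum_{j=1}^p(\rho_{nj}\|g_j\|_{F,j}+\lambda_{nj}\|g_j\|_n)$. For a constant $A_0>1$, $\hat g=\sum_j\hat g_j$ is a minimizer of $K_n(g)=\|Y-g\|_n^2/2+A_0R_n(g)$ over $g\in\mathcal G$ and decompositions. Empirical compatibility condition for $(S,\kappa_0,\xi_0)$: for all $f_j\in\mathcal G_j$ and $f=\sum_jf_j$, if $\sum_{j=1}^p\lambda_{nj}w_{nj}\|f_j\|_{F,j}+\sum_{j\notin S}\lambda_{nj}\|f_j\|_n\le\xi_0\sum_{j\in S}\lambda_{nj}\|f_j\|_n$, then $\kappa_0^2(\sum_{j\in S}\lambda_{nj}\|f_j\|_n)^2\le(\sum_{j\in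 S}\lambda_{nj}^2)\|f\|_n^2$. *)

From HB Require Import structures.
From mathcomp Require Import all_boot all_order all_algebra.
From mathcomp Require Import all_classical all_reals all_analysis.
Set Implicit Arguments.
Unset Strict Implicit.
Unset Printing Implicit Defensive.
Import Order.TTheory GRing.Theory Num.Theory.
Local Open Scope classical_set_scope.
Local Open Scope ring_scope.

Section Defs.
Variables (R : realType) (d n : nat) (X : 'I_n -> 'rV[R]_d).

Notation fn := ('rV[R]_d -> R).

Definition emp_norm (f : fn) : R :=
  Num.sqrt (n%:R^-1 * \sum_(i < n) f (X i) ^+ 2).

Definition emp_sq_res (y : 'I_n -> R) (f : fn) : R :=
  n%:R^-1 * \sum_(i < n) (y i - f (X i)) ^+ 2.

Definition emp_inner (e : 'I_n -> R) (f : fn) : R :=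
  n%:R^-1 * \sum_(i < n) e i * f (X i).

Definition covered_by (u : R) (F : set fn) (N : nat) : Prop :=
  exists c : 'I_N -> fn,
    forall f, F f -> exists k : 'I_N, emp_norm (fun x => f x - c k x) <= u.

(* metric entropy H(u, F, ||.||_n) = log of minimal covering number
   (+oo if no finite cover exists) *)
Definition entropy (u : R) (F : set fn) : \bar R :=
  ereal_inf [set (ln (N%:R) : R)%:E | N in [set N : nat | covered_by u F N]].

Definition entropy_integral (delta : R) (F : set fn) : \bar R :=
  (\int[@lebesgue_measure R]_(u in `[0%R, delta]) sqrte (entropy u F))%E.

End Defs.

Definition gsum (R : realType) (d p : nat) (gs : 'I_p -> 'rV[R]_d -> R) :
  'rV[R]_d -> R := fun x => \sum_(j < p) gs j x.

Definition depends_only_on (R : realType) (d : nat) (J : {set 'I_d})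
  (f : 'rV[R]_d -> R) : Prop :=
  forall x y : 'rV[R]_d, (forall k, k \in J -> x ord0 k = y ord0 k) -> f x = f y.

Definition fun_subspace (R : realType) (d : nat) (G : set ('rV[R]_d -> R)) : Prop :=
  G (fun _ => 0) /\
  (forall f g, G f -> G g -> G (fun x => f x + g x)) /\
  (forall (a : R) f, G f -> G (fun x => a * f x)).

Definition seminorm_on (R : realType) (d : nat) (G : set ('rV[R]_d -> R))
  (N : ('rV[R]_d -> R) -> R) : Prop :=
  (forall f, G f -> 0 <= N f) /\
  (forall (a : R) f, G f -> N (fun x => a * f x) = `|a| * N f) /\
  (forall f g, G f -> G g -> N (fun x => f x + g x) <= N f + N g).

Definition mutually_independent (R : realType) (dT : measure_display)
  (T : measurableType dT) (P : probability T R) (n : nat) (e : 'I_n -> T -> R) : Prop :=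
  forall B : 'I_n -> set R, (forall i, measurable (B i)) ->
    fine (P (\bigcap_(i in [set: 'I_n]) (e i @^-1` B i))) =
    \prod_(i < n) fine (P (e i @^-1` B i)).

Definition penalty (R : realType) (d n p : nat) (X : 'I_n -> 'rV[R]_d)
  (rho lam : 'I_p -> R) (Fn : 'I_p -> ('rV[R]_d -> R) -> R)
  (gs : 'I_p -> 'rV[R]_d -> R) : R :=
  \sum_(j < p) (rho j * Fn j (gs j) + lam j * emp_norm X (gs j)).

Definition G_delta (R : realType) (d n : nat) (X : 'I_n -> 'rV[R]_d)
  (Gj : set ('rV[R]_d -> R)) (Fnj : ('rV[R]_d -> R) -> R) (delta : R)
  : set ('rV[R]_d -> R) :=
  [set f | Gj f /\ Fnj f + emp_norm X f / delta <= 1].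

(* Testing the minimality of K_n at ghat against ghat + t (gbar - ghat) and
   letting t -> 0 gives the basic inequality
     ||ghat - g*||_n^2 / 2 + ||ghat - gbar||_n^2 / 2
       <= ||gbar - g*||_n^2 / 2 + <eps, ghat - gbar>_n + A0 (R_n(gbar) - R_n(ghat)).
   Apply the maximal inequality to every ball G_j(w_j) with t = log(p / epsilon);
   a union bound over j yields an event of probability at least 1 - epsilon on
   which, by homogeneity, |<eps, f>_n| <= rho_j ||f||_F + lambda_j ||f||_n for all
   f in G_j, so the noise term is at most R_n(ghat - gbar).  The triangle
   inequality, component by component, then gives
     D_n <= Delta_n(gbar, S) + 2 A0 T,  T = sum_(j in S) lambda_j ||ghat_j - gbar_j||_n.
   Either ghat - gbar lies outside the cone of the compatibility condition, and
   the rest of the penalty of ghat - gbar dominates xi_0 T, which is absorbed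
   into D_n; or it lies inside, and
   kappa_0 T <= (sum_(j in S) lambda_j^2)^(1/2) ||ghat - gbar||_n, which is
   absorbed by AM-GM. *)

From HB Require Import structures.
From mathcomp Require Import all_boot all_order all_algebra.
From mathcomp Require Import all_classical all_reals all_analysis.
From mathcomp Require Import ring lra.
Import Order.TTheory GRing.Theory Num.Theory.
Local Open Scope classical_set_scope.
Local Open Scope ring_scope.

Lemma sum_mul_sqr_le (R : realDomainType) (I : finType) (F G : I -> R) :
  (\sum_i F i * G i) ^+ 2 <= (\sum_i F i ^+ 2) * (\sum_i G i ^+ 2).
Proof.
set A := \sum_i \sum_j F i ^+ 2 * G j ^+ 2.
set B := \sum_i \sum_j F j ^+ 2 * G i ^+ 2.
set C := \sum_i \sum_j F i * G i * (F j * G j).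
have hA : (\sum_i F i ^+ 2) * (\sum_i G i ^+ 2) = A by rewrite big_distrlr.
have hB : (\sum_i F i ^+ 2) * (\sum_i G i ^+ 2) = B.
  rewrite mulrC big_distrlr; apply: eq_bigr => i _; apply: eq_bigr => j _.
  exact: mulrC.
have hC : (\sum_i F i * G i) ^+ 2 = C by rewrite expr2 big_distrlr.
have lagrange : \sum_i \sum_j (F i * G j - F j * G i) ^+ 2 = A + B - 2 * C.
  rewrite /A /B /C mulr_sumr -big_split /= -sumrB; apply: eq_bigr => i _.
  rewrite mulr_sumr -big_split /= -sumrB; apply: eq_bigr => j _; ring.
have : 0 <= \sum_i \sum_j (F i * G j - F j * G i) ^+ 2.
  by apply: sumr_ge0 => i _; apply: sumr_ge0 => j _; exact: sqr_ge0.
rewrite lagrange -hB -hA hC; lra.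
Qed.

Section EmpiricalMean.
Context {R : realType} {n : nat}.
Implicit Types (F G : 'I_n -> R).

Definition avg F : R := n%:R^-1 * \sum_(i < n) F i.

Lemma eq_avg F G : F =1 G -> avg F = avg G.
Proof. by move=> FG; rewrite /avg (eq_bigr _ (fun i _ => FG i)). Qed.

Lemma avgD F G : avg (fun i => F i + G i) = avg F + avg G.
Proof. by rewrite /avg big_split /= mulrDr. Qed.

Lemma avgZ c F : avg (fun i => c * F i) = c * avg F.
Proof. by rewrite /avg -mulr_sumr mulrCA. Qed.

Lemma avgB F G : avg (fun i => F i - G i) = avg F - avg G.
Proof. by rewrite /avg sumrB mulrBr. Qed.

Lemma avg_ge0 F : (forall i, 0 <= F i) -> 0 <= avg F.
Proof. by move=> F0; rewrite mulr_ge0 ?invr_ge0 ?sumr_ge0. Qed.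

Lemma avg_sum (p : nat) (F : 'I_p -> 'I_n -> R) :
  avg (fun i => \sum_(j < p) F j i) = \sum_(j < p) avg (F j).
Proof. by rewrite /avg exchange_big /= mulr_sumr. Qed.

Lemma avg_mul_le F G :
  avg (fun i => F i * G i)
    <= Num.sqrt (avg (fun i => F i ^+ 2)) * Num.sqrt (avg (fun i => G i ^+ 2)).
Proof.
rewrite -sqrtrM ?avg_ge0 // => [|i]; last exact: sqr_ge0.
rewrite (le_trans (ler_norm _)) // -sqrtr_sqr ler_sqrt; last first.
  by rewrite mulr_ge0 ?avg_ge0 // => i; exact: sqr_ge0.
rewrite /avg exprMn [in leRHS]mulrACA -expr2 ler_wpM2l ?sqr_ge0 //.
exact: sum_mul_sqr_le.
Qed.

End EmpiricalMean.

Section Seminorm.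
Context {R : realType} {d : nat} {G : set ('rV[R]_d -> R)}.
Context {N : ('rV[R]_d -> R) -> R}.
Hypotheses (HG : fun_subspace G) (HN : seminorm_on G N).

Lemma subspaceD {f g} : G f -> G g -> G (fun x => f x + g x).
Proof. by case: HG => _ [+ _]; apply. Qed.

Lemma subspaceZ a {f} : G f -> G (fun x => a * f x).
Proof. by case: HG => _ [_]; apply. Qed.

Lemma subspaceB {f g} : G f -> G g -> G (fun x => f x - g x).
Proof.
move=> Gf /(subspaceZ (-1)) /(subspaceD Gf).
by congr G; apply/funext => x; rewrite mulN1r.
Qed.

Lemma subspace_conv t {f g} : G f -> G g -> G (fun x => f x + t * (g x - f x)).
Proof. by move=> Gf Gg; apply/(subspaceD Gf)/subspaceZ/subspaceB. Qed.

Lemma seminorm_ge0 {f} : G f -> 0 <= N f.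
Proof. by case: HN => + _; apply. Qed.

Lemma seminormZ a {f} : G f -> N (fun x => a * f x) = `|a| * N f.
Proof. by case: HN => _ [+ _]; apply. Qed.

Lemma seminormD {f g} : G f -> G g -> N (fun x => f x + g x) <= N f + N g.
Proof. by case: HN => _ [_]; apply. Qed.

Lemma seminormB {f g} : G f -> G g -> N (fun x => f x - g x) <= N f + N g.
Proof.
move=> Gf Gg; have G'g := subspaceZ (-1) Gg.
have -> : (fun x => f x - g x) = (fun x => f x + (-1) * g x).
  by apply/funext => x; rewrite mulN1r.
by rewrite (le_trans (seminormD Gf G'g)) // seminormZ // normrN normr1 mul1r.
Qed.

Lemma seminorm_le_addB {f g} : G f -> G g -> N g <= N f + N (fun x => f x - g x).
Proof.
move=> Gf Gg; have Gfg := subspaceB Gf Gg.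
have -> : N g = N (fun x => f x + (-1) * (f x - g x)).
  by congr N; apply/funext => x; ring.
by rewrite (le_trans (seminormD Gf (subspaceZ _ Gfg))) // seminormZ // normrN normr1 mul1r.
Qed.

Lemma seminorm_conv {t f g} : 0 <= t <= 1 -> G f -> G g ->
  N (fun x => f x + t * (g x - f x)) <= (1 - t) * N f + t * N g.
Proof.
move=> /andP[t0 t1] Gf Gg.
have -> : (fun x => f x + t * (g x - f x)) = (fun x => (1 - t) * f x + t * g x).
  by apply/funext => x; ring.
rewrite (le_trans (seminormD (subspaceZ _ Gf) (subspaceZ _ Gg))) //.
by rewrite !seminormZ // !ger0_norm ?subr_ge0.
Qed.

End Seminorm.

Lemma fun_subspaceT (R : realType) (d : nat) : fun_subspace (@setT ('rV[R]_d -> R)).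
Proof. by []. Qed.

Section EmpiricalNorm.
Context {R : realType} {d n : nat} (X : 'I_n -> 'rV[R]_d).
Implicit Types (f g : 'rV[R]_d -> R).

Lemma emp_norm_ge0 f : 0 <= emp_norm X f.
Proof. exact: sqrtr_ge0. Qed.

Lemma emp_norm_sqr f : emp_norm X f ^+ 2 = avg (fun i => f (X i) ^+ 2).
Proof. by rewrite sqr_sqrtr // avg_ge0 // => i; exact: sqr_ge0. Qed.

Lemma emp_normZ a f : emp_norm X (fun x => a * f x) = `|a| * emp_norm X f.
Proof.
rewrite /emp_norm -/(avg _) -/(avg _).
rewrite (@eq_avg _ _ _ (fun i => a ^+ 2 * f (X i) ^+ 2)) => [|i]; last exact: exprMn.
by rewrite avgZ sqrtrM ?sqr_ge0 // sqrtr_sqr.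
Qed.

Lemma emp_normD f g :
  emp_norm X (fun x => f x + g x) <= emp_norm X f + emp_norm X g.
Proof.
rewrite -ler_sqr ?nnegrE ?addr_ge0 ?emp_norm_ge0 // !emp_norm_sqr.
rewrite (@eq_avg _ _ _ (fun i => f (X i) ^+ 2 + g (X i) ^+ 2 + 2 * (f (X i) * g (X i))))
  => [|i]; last by ring.
rewrite !avgD avgZ sqrrD -!emp_norm_sqr.
have := avg_mul_le (fun i => f (X i)) (fun i => g (X i)).
rewrite -!/(emp_norm X _); lra.
Qed.

Lemma emp_norm_seminorm : seminorm_on setT (emp_norm X).
Proof.
split=> [f _|]; first exact: emp_norm_ge0.
by split=> [a f _|f g _ _]; [exact: emp_normZ | exact: emp_normD].
Qed.

Lemma emp_normB f g : emp_norm X (fun x => f x - g x) <= emp_norm X f + emp_norm X g.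
Proof. exact: (seminormB (fun_subspaceT _ _) emp_norm_seminorm (I : setT f) (I : setT g)). Qed.

Lemma emp_norm_le_addB f g : emp_norm X g <= emp_norm X f + emp_norm X (fun x => f x - g x).
Proof.
exact: (seminorm_le_addB (fun_subspaceT _ _) emp_norm_seminorm (I : setT f) (I : setT g)).
Qed.

Lemma emp_norm_conv f g {t} : 0 <= t <= 1 ->
  emp_norm X (fun x => f x + t * (g x - f x))
  <= (1 - t) * emp_norm X f + t * emp_norm X g.
Proof.
move=> t01.
exact: (seminorm_conv (fun_subspaceT _ _) emp_norm_seminorm t01 (I : setT f) (I : setT g)).
Qed.

End EmpiricalNorm.

Lemma ler_of_ler_addt {R : realFieldType} {x y c : R} :
  0 <= c -> (forall t, 0 < t <= 1 -> x <= y + t * c) -> x <= y.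
Proof.
move=> c0 xle; apply/ler_addgt0Pr => e e0.
have ec0 : 0 < e + c by rewrite ltr_wpDr.
apply: le_trans (xle (e / (e + c)) _) _.
  by rewrite divr_gt0 // ler_pdivrMr // mul1r lerDl.
rewrite lerD2l mulrAC ler_pdivrMr //; nra.
Qed.

Lemma gsumB (R : realType) (d p : nat) (g h : 'I_p -> 'rV[R]_d -> R) :
  gsum (fun j x => g j x - h j x) = (fun x => gsum g x - gsum h x).
Proof. by apply/funext => x; rewrite /gsum sumrB. Qed.

Section Penalty.
Context {R : realType} {d n p : nat} (X : 'I_n -> 'rV[R]_d).
Context {G : 'I_p -> set ('rV[R]_d -> R)} {Fn : 'I_p -> ('rV[R]_d -> R) -> R}.
Context {rho lam : 'I_p -> R}.
Hypotheses (HG : forall j, fun_subspace (G j)) (HN : forall j, seminorm_on (G j) (Fn j)).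
Hypotheses (rho0 : forall j, 0 <= rho j) (lam0 : forall j, 0 <= lam j).

Local Notation pen := (penalty X rho lam Fn).
Local Notation in_G gs := (forall j, G j (gs j)).

Lemma penalty_ge0 {gs} : in_G gs -> 0 <= pen gs.
Proof.
move=> Ggs; apply: sumr_ge0 => j _.
by rewrite addr_ge0 ?mulr_ge0 ?emp_norm_ge0 ?(seminorm_ge0 (HN j)).
Qed.

Lemma penalty_conv {t g h} : 0 <= t <= 1 -> in_G g -> in_G h ->
  pen (fun j x => g j x + t * (h j x - g j x)) <= (1 - t) * pen g + t * pen h.
Proof.
move=> t01 Gg Gh; rewrite /penalty !mulr_sumr -big_split /=.
apply: ler_sum => j _.
have convF := seminorm_conv (HG j) (HN j) t01 (Gg j) (Gh j).
have conv_n := emp_norm_conv X (g j) (h j) t01.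
have := ler_wpM2l (rho0 j) convF; have := ler_wpM2l (lam0 j) conv_n; lra.
Qed.

Lemma penalty_split (S : {set 'I_p}) gs :
  pen gs = (\sum_(j < p) rho j * Fn j (gs j)
            + \sum_(j < p | j \notin S) lam j * emp_norm X (gs j))
           + \sum_(j < p | j \in S) lam j * emp_norm X (gs j).
Proof.
rewrite /penalty (big_mkcond (fun j => j \notin S)) (big_mkcond (fun j => j \in S)) /=.
by rewrite -!big_split /=; apply: eq_bigr => j _; case: (j \in S) => /=; ring.
Qed.

Lemma penalty_triangle (S : {set 'I_p}) {g h} : in_G g -> in_G h ->
  pen (fun j x => g j x - h j x) + pen h - pen g
  <= 2 * (\sum_(j < p) rho j * Fn j (h j)
          + \sum_(j < p | j \notin S) lam j * emp_norm X (h j))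
     + 2 * \sum_(j < p | j \in S) lam j * emp_norm X (fun x => g j x - h j x).
Proof.
move=> Gg Gh; rewrite /penalty -big_split /= -sumrB.
rewrite (big_mkcond (fun j => j \notin S)) (big_mkcond (fun j => j \in S)) /=.
rewrite !mulr_sumr -!big_split /= mulr_sumr -big_split /=.
apply: ler_sum => j _.
have sumF := seminormB (HG j) (HN j) (Gg j) (Gh j).
have sum_n := emp_normB X (g j) (h j).
have rev_n := emp_norm_le_addB X (g j) (h j).
have := ler_wpM2l (rho0 j) sumF.
have := ler_wpM2l (lam0 j) sum_n; have := ler_wpM2l (lam0 j) rev_n.
by case: (j \in S) => /=; lra.
Qed.

End Penalty.

Section EmpiricalInner.
Context {R : realType} {d n : nat} (X : 'I_n -> 'rV[R]_d) (e : 'I_n -> R).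

Lemma emp_innerZ a f : emp_inner X e (fun x => a * f x) = a * emp_inner X e f.
Proof. by rewrite /emp_inner -!/(avg _) -avgZ; apply: eq_avg => i; ring. Qed.

Lemma emp_inner_gsumB p (g h : 'I_p -> 'rV[R]_d -> R) :
  emp_inner X e (fun x => gsum g x - gsum h x)
  = \sum_(j < p) emp_inner X e (fun x => g j x - h j x).
Proof.
rewrite -gsumB /emp_inner -!/(avg _) -avg_sum; apply: eq_avg => i.
by rewrite /gsum mulr_sumr.
Qed.

End EmpiricalInner.

Section BasicInequality.
Context {R : realType} {d n p : nat} (X : 'I_n -> 'rV[R]_d).
Context {G : 'I_p -> set ('rV[R]_d -> R)} {Fn : 'I_p -> ('rV[R]_d -> R) -> R}.
Context {rho lam : 'I_p -> R} {A0 : R} {e : 'I_n -> R} {gstar : 'rV[R]_d -> R}.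
Hypotheses (HG : forall j, fun_subspace (G j)) (HN : forall j, seminorm_on (G j) (Fn j)).
Hypotheses (rho0 : forall j, 0 <= rho j) (lam0 : forall j, 0 <= lam j) (A0_ge0 : 0 <= A0).

Local Notation pen := (penalty X rho lam Fn).
Local Notation in_G gs := (forall j, G j (gs j)).
Let Y i := gstar (X i) + e i.
Let Kn gs := emp_sq_res X Y (gsum gs) / 2 + A0 * pen gs.

Lemma basic_inequality {ghat gbar} : in_G ghat -> in_G gbar ->
  (forall gs, in_G gs -> Kn ghat <= Kn gs) ->
  emp_norm X (fun x => gsum ghat x - gstar x) ^+ 2 / 2
    + emp_norm X (fun x => gsum ghat x - gsum gbar x) ^+ 2 / 2
  <= emp_norm X (fun x => gsum gbar x - gstar x) ^+ 2 / 2
    + emp_inner X e (fun x => gsum ghat x - gsum gbar x)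
    + A0 * (pen gbar - pen ghat).
Proof.
move=> Ghat Gbar Kmin.
set u := gsum ghat; set v := gsum gbar.
set I := avg (fun i => (Y i - u (X i)) * (v (X i) - u (X i))).
set Q := avg (fun i => (v (X i) - u (X i)) ^+ 2).
have I_le t : 0 < t <= 1 -> I <= A0 * (pen gbar - pen ghat) + t * (Q / 2).
  move=> /andP[t0 t1]; have t01 : 0 <= t <= 1 by rewrite ltW.
  pose gt j x := ghat j x + t * (gbar j x - ghat j x).
  have gsum_gt : gsum gt = fun x => u x + t * (v x - u x).
    by apply/funext => x; rewrite /gsum /gt big_split /= -mulr_sumr sumrB.
  have res_gt : emp_sq_res X Y (gsum gt) = emp_sq_res X Y u - 2 * t * I + t ^+ 2 * Q.
    rewrite gsum_gt /emp_sq_res -!/(avg _) -!avgZ -avgB -avgD.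
    by apply: eq_avg => i; ring.
  have pen_gt := penalty_conv X HG HN rho0 lam0 t01 Ghat Gbar.
  have := Kmin gt (fun j => subspace_conv (HG j) t (Ghat j) (Gbar j)).
  rewrite /Kn res_gt => Kle.
  have : t * I <= t * (A0 * (pen gbar - pen ghat) + t * (Q / 2)).
    by have := ler_wpM2l A0_ge0 pen_gt; lra.
  by rewrite ler_pM2l.
have Q0 : 0 <= Q / 2 by rewrite divr_ge0 ?avg_ge0 // => i; exact: sqr_ge0.
have {I_le} := ler_of_ler_addt Q0 I_le.
suff -> : I = emp_norm X (fun x => u x - gstar x) ^+ 2 / 2
    + emp_norm X (fun x => u x - v x) ^+ 2 / 2
    - emp_norm X (fun x => v x - gstar x) ^+ 2 / 2
    - emp_inner X e (fun x => u x - v x) by lra.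
rewrite !emp_norm_sqr /emp_inner -/(avg _) !(mulrC _ 2^-1) -!avgZ -avgD -!avgB.
by apply: eq_avg => i; rewrite /Y; field.
Qed.

End BasicInequality.

Lemma oracle_bound_arith {R : realFieldType} (A0 xi0 kappa D Delta T Q a2 L : R) :
  1 < A0 -> 1 < xi0 -> (xi0 + 1) / (xi0 - 1) < A0 -> 0 < kappa ->
  0 <= Delta -> 0 <= T -> 0 <= a2 -> 0 <= L ->
  a2 / 2 <= D -> (A0 - 1) * (Q + T) <= D -> D <= Delta + 2 * A0 * T ->
  (Q <= xi0 * T -> kappa ^+ 2 * T ^+ 2 <= L * a2) ->
  D <= (1 - 2 * A0 / ((xi0 + 1) * (A0 - 1)))^-1 * Delta
       + 2 * ((xi0 + 1) * (A0 - 1)) ^+ 2 * kappa ^- 2 * L.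
Proof.
move=> A0_gt1 xi0_gt1 A0_big kappa_gt0 Delta0 T0 a20 L0 a2_le Rh_le D_le compat.
set xi2 := (xi0 + 1) * (A0 - 1).
have gap : 2 * A0 < xi2.
  move: A0_big; rewrite ltr_pdivrMr ?subr_gt0 // /xi2; nra.
have xi1E : (1 - 2 * A0 / xi2)^-1 = xi2 / (xi2 - 2 * A0).
  have xi2_gt0 : xi2 != 0 by rewrite gt_eqF //; lra.
  have -> : 1 - 2 * A0 / xi2 = (xi2 - 2 * A0) / xi2 by field.
  by rewrite invf_div.
rewrite xi1E -mulrA; set M := kappa ^- 2 * L.
have M0 : 0 <= M by rewrite mulr_ge0 // invr_ge0 exprn_ge0 // ltW.
have slack0 : 0 <= 2 * xi2 ^+ 2 * M by rewrite mulr_ge0 // mulr_ge0 ?sqr_ge0.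
have gap0 : 0 < xi2 - 2 * A0 by rewrite subr_gt0.
have [Q_big|Q_small] := ltrP (xi0 * T) Q.
  have xi2T : xi2 * T <= D by rewrite /xi2; nra.
  suff : D <= xi2 / (xi2 - 2 * A0) * Delta by lra.
  by rewrite mulrAC ler_pdivlMr //; nra.
have T_sqr : T ^+ 2 <= M * a2.
  by rewrite /M -mulrA ler_pdivlMl ?exprn_gt0 // compat.
have amgm : 4 * xi2 * T <= a2 + 4 * xi2 ^+ 2 * M.
  have xi2_sqr0 : 0 <= xi2 ^+ 2 by exact: sqr_ge0.
  have lhs0 : 0 <= 4 * xi2 * T by rewrite mulr_ge0 // mulr_ge0 //; lra.
  have rhs0 : 0 <= a2 + 4 * xi2 ^+ 2 * M by rewrite addr_ge0 // mulr_ge0 // mulr_ge0.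
  rewrite -ler_sqr ?nnegrE //.
  have : 0 <= (a2 - 4 * xi2 ^+ 2 * M) ^+ 2 by exact: sqr_ge0.
  have : 16 * xi2 ^+ 2 * T ^+ 2 <= 16 * xi2 ^+ 2 * (M * a2).
    by rewrite ler_wpM2l // mulr_ge0.
  nra.
have D_small : (xi2 - A0) * D <= xi2 * Delta + 2 * A0 * xi2 ^+ 2 * M.
  have A0_ge0 : 0 <= A0 by lra.
  have xi2_ge0 : 0 <= xi2 by lra.
  have := ler_wpM2l A0_ge0 amgm; have := ler_wpM2l xi2_ge0 D_le.
  nra.
have dA : 0 < xi2 - A0 by lra.
rewrite -(ler_pM2l dA) mulrDr; apply: (le_trans D_small); apply: lerD.
  have -> : (xi2 - A0) * (xi2 / (xi2 - 2 * A0) * Delta)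
            = (xi2 - A0) / (xi2 - 2 * A0) * (xi2 * Delta) by field; rewrite gt_eqF.
  by rewrite ler_peMl ?mulr_ge0 ?ler_pdivlMr ?mul1r //; lra.
have : A0 <= xi2 - A0 by lra.
nra.
Qed.

Definition noise_dominated {R : realType} {d n p : nat} (X : 'I_n -> 'rV[R]_d)
    (G : 'I_p -> set ('rV[R]_d -> R)) (Fn : 'I_p -> ('rV[R]_d -> R) -> R)
    (rho lam : 'I_p -> R) (e : 'I_n -> R) :=
  forall j f, G j f -> `|emp_inner X e f| <= rho j * Fn j f + lam j * emp_norm X f.

Definition compatibility_condition {R : realType} {d n p : nat} (X : 'I_n -> 'rV[R]_d)
    (G : 'I_p -> set ('rV[R]_d -> R)) (Fn : 'I_p -> ('rV[R]_d -> R) -> R)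
    (rho lam : 'I_p -> R) (S : {set 'I_p}) (kappa0 xi0 : R) :=
  forall f : 'I_p -> 'rV[R]_d -> R, (forall j, G j (f j)) ->
    \sum_(j < p) rho j * Fn j (f j)
      + \sum_(j < p | j \notin S) lam j * emp_norm X (f j)
      <= xi0 * \sum_(j < p | j \in S) lam j * emp_norm X (f j) ->
    kappa0 ^+ 2 * (\sum_(j < p | j \in S) lam j * emp_norm X (f j)) ^+ 2
      <= (\sum_(j < p | j \in S) lam j ^+ 2) * emp_norm X (gsum f) ^+ 2.

Section OracleInequality.
Context {R : realType} {d n p : nat} (X : 'I_n -> 'rV[R]_d).
Context {G : 'I_p -> set ('rV[R]_d -> R)} {Fn : 'I_p -> ('rV[R]_d -> R) -> R}.
Context {rho lam : 'I_p -> R}.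
Hypotheses (HG : forall j, fun_subspace (G j)) (HN : forall j, seminorm_on (G j) (Fn j)).
Hypotheses (rho0 : forall j, 0 <= rho j) (lam0 : forall j, 0 <= lam j).

Local Notation pen := (penalty X rho lam Fn).
Local Notation in_G gs := (forall j, G j (gs j)).

Lemma emp_inner_le_penalty {e g h} : noise_dominated X G Fn rho lam e -> in_G g -> in_G h ->
  emp_inner X e (fun x => gsum g x - gsum h x) <= pen (fun j x => g j x - h j x).
Proof.
move=> noise Gg Gh; rewrite emp_inner_gsumB; apply: ler_sum => j _.
exact: le_trans (ler_norm _) (noise _ _ (subspaceB (HG j) (Gg j) (Gh j))).
Qed.

Lemma oracle_inequality {A0 : R} {e gstar S kappa0 xi0 gbar ghat} :
  1 < A0 -> 1 < xi0 -> (xi0 + 1) / (xi0 - 1) < A0 -> 0 < kappa0 ->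
  noise_dominated X G Fn rho lam e -> compatibility_condition X G Fn rho lam S kappa0 xi0 ->
  in_G gbar -> in_G ghat ->
  (forall gs, in_G gs ->
     emp_sq_res X (fun i => gstar (X i) + e i) (gsum ghat) / 2 + A0 * pen ghat
     <= emp_sq_res X (fun i => gstar (X i) + e i) (gsum gs) / 2 + A0 * pen gs) ->
  emp_norm X (fun x => gsum ghat x - gstar x) ^+ 2 / 2
    + emp_norm X (fun x => gsum ghat x - gsum gbar x) ^+ 2 / 2
    + (A0 - 1) * pen (fun j x => ghat j x - gbar j x)
  <= (1 - 2 * A0 / ((xi0 + 1) * (A0 - 1)))^-1 *
       (emp_norm X (fun x => gsum gbar x - gstar x) ^+ 2 / 2
        + 2 * A0 * (\sum_(j < p) rho j * Fn j (gbar j)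
                    + \sum_(j < p | j \notin S) lam j * emp_norm X (gbar j)))
     + 2 * ((xi0 + 1) * (A0 - 1)) ^+ 2 * kappa0 ^- 2 * (\sum_(j < p | j \in S) lam j ^+ 2).
Proof.
move=> A0_gt1 xi0_gt1 A0_big kappa0_gt0 noise compat Gbar Ghat Kmin.
have A0_ge0 : 0 <= A0 by lra.
have Gh j : G j (fun x => ghat j x - gbar j x) := subspaceB (HG j) (Ghat j) (Gbar j).
have basic := basic_inequality X HG HN rho0 lam0 A0_ge0 Ghat Gbar Kmin.
have inner_le := emp_inner_le_penalty noise Ghat Gbar.
have triangle := penalty_triangle X HG HN rho0 lam0 S Ghat Gbar.
have Rh0 := penalty_ge0 X HN rho0 lam0 Gh.
have compat_h := compat _ Gh; rewrite gsumB in compat_h.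
have split := penalty_split X S (fun j x => ghat j x - gbar j x).
set T := \sum_(j in S) _ in split compat_h triangle.
set Q := _ + _ in split compat_h.
set Fbar := \sum_(j < p) rho j * Fn j (gbar j) in triangle *.
set Sbar := \sum_(j < p | j \notin S) _ in triangle *.
have T0 : 0 <= T by apply: sumr_ge0 => j _; rewrite mulr_ge0 ?emp_norm_ge0.
have Fbar0 : 0 <= Fbar by apply: sumr_ge0 => j _; rewrite mulr_ge0 ?(seminorm_ge0 (HN j)).
have Sbar0 : 0 <= Sbar by apply: sumr_ge0 => j _; rewrite mulr_ge0 ?emp_norm_ge0.
have L0 : 0 <= \sum_(j in S) lam j ^+ 2 by apply: sumr_ge0 => j _; exact: sqr_ge0.
have sqr0 (f : 'rV[R]_d -> R) : 0 <= emp_norm X f ^+ 2 by exact: sqr_ge0.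
have A0_1 : 0 <= A0 - 1 by lra.
have A0_triangle := ler_wpM2l A0_ge0 triangle.
have a1_0 := sqr0 (fun x => gsum ghat x - gstar x).
have a2_0 := sqr0 (fun x => gsum ghat x - gsum gbar x).
apply: (@oracle_bound_arith _ A0 xi0 kappa0 _ _ T Q
  (emp_norm X (fun x => gsum ghat x - gsum gbar x) ^+ 2)) => //.
- have := sqr0 (fun x => gsum gbar x - gstar x).
  by have := mulr_ge0 A0_ge0 (addr_ge0 Fbar0 Sbar0); lra.
- by have := mulr_ge0 A0_1 Rh0; lra.
- by rewrite -split; lra.
- by lra.
Qed.

End OracleInequality.

Lemma probability_compl_bigsetU_ge {R : realType} {dT : measure_display}
    {T : measurableType dT} (P : probability T R) {p : nat} {B : 'I_p -> set T} {c : R} :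
  (forall j, measurable (B j)) -> (forall j, (P (B j) <= c%:E)%E) ->
  ((1 - p%:R * c)%:E <= P (~` \big[setU/set0]_(j < p) B j))%E.
Proof.
move=> mB PB; pose A k := if insub k is Some j then B j else set0.
have AB (j : 'I_p) : A j = B j by rewrite /A valK.
have mA k : (k < p)%N -> measurable (A k).
  by move=> _; rewrite /A; case: insubP => [j _ _|_]; [exact: mB | exact: measurable0].
have -> : \big[setU/set0]_(j < p) B j = \big[setU/set0]_(j < p) A j.
  by apply: eq_bigr => j _; rewrite AB.
rewrite probability_setC; last by apply: bigsetU_measurable => j _; exact: mA.
rewrite EFinB leeB // (le_trans (Boole_inequality P mA)) //.
rewrite (_ : p%:R * c = \sum_(j < p) c); last by rewrite sumr_const card_ord mulr_natl.
by rewrite -sumEFin; apply: lee_sum => j _; rewrite AB; exact: PB.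
Qed.

Lemma entropy_integral_ge0 {R : realType} {d n : nat} (X : 'I_n -> 'rV[R]_d)
    (delta : R) (F : set ('rV[R]_d -> R)) :
  (0 <= entropy_integral X delta F)%E.
Proof. by apply: integral_ge0 => u _; exact: sqrte_ge0. Qed.

Section DeltaBall.
Context {R : realType} {d n : nat} (X : 'I_n -> 'rV[R]_d).
Context {Gj : set ('rV[R]_d -> R)} {N : ('rV[R]_d -> R) -> R}.
Hypotheses (HG : fun_subspace Gj) (HN : seminorm_on Gj N).

Lemma G_delta_emp_norm_le {w : R} {f} : 0 < w -> G_delta X Gj N w f -> emp_norm X f <= w.
Proof.
move=> w0 [Gf ball]; have Nf0 := seminorm_ge0 HN Gf.
have : emp_norm X f / w <= 1 by lra.
by rewrite ler_pdivrMr // mul1r.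
Qed.

(* [G_delta X Gj N w] is the unit ball of f |-> N f + ||f||_n / w, so the bound
   rescales to all of [Gj]. *)
Lemma emp_inner_le_of_ball {e : 'I_n -> R} {l w : R} : 0 < w -> 0 <= l ->
  (forall f, G_delta X Gj N w f -> `|emp_inner X e f| <= l * w) ->
  forall f, Gj f -> `|emp_inner X e f| <= l * w * N f + l * emp_norm X f.
Proof.
move=> w0 l0 ball f Gf; set c := N f + emp_norm X f / w.
have c0 : 0 <= c by rewrite addr_ge0 ?divr_ge0 ?emp_norm_ge0 ?(seminorm_ge0 HN) ?ltW.
have -> : l * w * N f + l * emp_norm X f = l * w * c by rewrite /c; field; rewrite gt_eqF.
apply: (ler_of_ler_addt (c := l * w)) => [|t /andP[t0 _]]; first exact: mulr_ge0 l0 (ltW w0).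
have s0 : 0 < c + t by rewrite ltr_wpDl.
have := ball (fun x => (c + t)^-1 * f x).
rewrite emp_innerZ normrM gtr0_norm ?invr_gt0 // -ler_pdivlMl ?invr_gt0 // invrK.
have -> : l * w * c + t * (l * w) = (c + t) * (l * w) by ring.
apply; split; first exact: subspaceZ.
rewrite (seminormZ HN) // emp_normZ gtr0_norm ?invr_gt0 // -mulrA -mulrDr.
by rewrite mulrC -/c ler_pdivrMr // mul1r lerDl ltW.
Qed.

End DeltaBall.

Definition maximal_inequality {R : realType} {dT : measure_display} {T : measurableType dT}
    (P : probability T R) {n d : nat} (X : 'I_n -> 'rV[R]_d) (eps : 'I_n -> T -> R)
    (C1 : R) : Prop :=
  forall (delta : R) (F : set ('rV[R]_d -> R)) (ps t : R),
    0 < delta ->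
    (forall f, F f -> emp_norm X f <= delta) ->
    (entropy_integral X delta F <= ps%:E)%E ->
    0 < t ->
    exists B : set T, measurable B /\
      [set w0 | exists2 f, F f &
         C1 * ((Num.sqrt n%:R)^-1 * ps + delta * Num.sqrt (t / n%:R))
           < `|emp_inner X (fun i => eps i w0) f| ] `<=` B /\
      (P B <= (expR (- t))%:E)%E.

Definition lambda_tuning {R : realType} (n p : nat) (C1 epsilon psi_w w : R) : R :=
  C1 * ((Num.sqrt n%:R)^-1 * psi_w / w + Num.sqrt (ln (p%:R / epsilon) / n%:R)).

Section Tuning.
Context {R : realType} (n p : nat) (C1 epsilon psi_w w : R).

Lemma lambda_tuning_ge0 : 0 <= C1 -> 0 <= psi_w -> 0 < w ->
  0 <= lambda_tuning n p C1 epsilon psi_w w.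
Proof.
move=> C10 psi0 w0; rewrite mulr_ge0 // addr_ge0 ?sqrtr_ge0 //.
by rewrite !mulr_ge0 ?invr_ge0 ?sqrtr_ge0 // ltW.
Qed.

Lemma lambda_tuning_mulw : (0 < n)%N -> 0 < w ->
  lambda_tuning n p C1 epsilon psi_w w * w
  = C1 * ((Num.sqrt n%:R)^-1 * psi_w + w * Num.sqrt (ln (p%:R / epsilon) / n%:R)).
Proof.
move=> n0 w0; rewrite /lambda_tuning; field.
by rewrite !gt_eqF // sqrtr_gt0 ltr0n.
Qed.

End Tuning.

Lemma ln_ratio_gt0 {R : realType} (p : nat) (epsilon : R) :
  (0 < p)%N -> 0 < epsilon < 1 -> 0 < ln (p%:R / epsilon).
Proof.
move=> p0 /andP[e0 e1]; rewrite ln_gt0 // ltr_pdivlMr // mul1r.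
by rewrite (lt_le_trans e1) // ler1n.
Qed.

Lemma union_level_le {R : realType} (p : nat) (epsilon : R) :
  0 < epsilon -> p%:R * expR (- ln (p%:R / epsilon)) <= epsilon.
Proof.
move=> e0; have [->|p0] := posnP p; first by rewrite mul0r ltW.
have p0' : (0 : R) < p%:R by rewrite ltr0n.
rewrite expRN lnK ?posrE ?divr_gt0 // invf_div mulrCA divff ?mulr1 //.
by rewrite gt_eqF.
Qed.

Section NoiseEvent.
Context {R : realType} {dT : measure_display} {T : measurableType dT}.
Context (P : probability T R) {n d p : nat} (X : 'I_n -> 'rV[R]_d) (eps : 'I_n -> T -> R).
Context {G : 'I_p -> set ('rV[R]_d -> R)} {Fn : 'I_p -> ('rV[R]_d -> R) -> R}.
Context {C1 epsilon : R} {psi : 'I_p -> R -> R} {w : 'I_p -> R}.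
Hypotheses (n_gt0 : (0 < n)%N) (HG : forall j, fun_subspace (G j)).
Hypotheses (HN : forall j, seminorm_on (G j) (Fn j)).
Hypotheses (C1_gt0 : 0 < C1) (maxineq : maximal_inequality P X eps C1).
Hypothesis entropy_bound : forall j (delta : R), 0 < delta <= 1 ->
  (entropy_integral X delta (G_delta X (G j) (Fn j) delta) <= (psi j delta)%:E)%E.
Hypotheses (epsilon01 : 0 < epsilon < 1) (w01 : forall j, 0 < w j <= 1).

Let lam j := lambda_tuning n p C1 epsilon (psi j (w j)) (w j).
Let t := ln (p%:R / epsilon).

Let w_gt0 j : 0 < w j.
Proof. by case/andP: (w01 j). Qed.

Lemma lambda_tuning_psi_ge0 j : 0 <= lam j.
Proof.
apply: lambda_tuning_ge0 (ltW C1_gt0) _ (w_gt0 j).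
by have := le_trans (entropy_integral_ge0 _ _ _) (entropy_bound j (w j) (w01 j)); rewrite lee_fin.
Qed.

Lemma noise_component_event j : exists B : set T,
  [/\ measurable B, (P B <= (expR (- t))%:E)%E &
      forall w0, ~ B w0 -> forall f, G_delta X (G j) (Fn j) (w j) f ->
        `|emp_inner X (fun i => eps i w0) f| <= lam j * w j].
Proof.
have t_gt0 : 0 < t by apply: ln_ratio_gt0 => //; exact: leq_ltn_trans (ltn_ord j).
have [B [mB [subB PB]]] := maxineq _ _ _ _ (w_gt0 j)
  (fun f => G_delta_emp_norm_le X (HN j) (w_gt0 j)) (entropy_bound j (w j) (w01 j)) t_gt0.
exists B; split=> // w0 notB f Ff; rewrite /lam lambda_tuning_mulw // ?w_gt0 //.
by rewrite leNgt; apply/negP => gt; apply: notB; apply: subB; exists f.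
Qed.

Lemma noise_event : exists E : set T,
  [/\ measurable E, ((1 - epsilon)%:E <= P E)%E &
      forall w0, E w0 ->
        noise_dominated X G Fn (fun j => lam j * w j) lam (fun i => eps i w0)].
Proof.
have [B HB] := choice noise_component_event.
have mB j : measurable (B j) by case: (HB j).
have PB j : (P (B j) <= (expR (- t))%:E)%E by case: (HB j).
exists (~` \big[setU/set0]_(j < p) B j); split.
- by apply/measurableC/bigsetU_measurable => j _.
- apply: le_trans (probability_compl_bigsetU_ge P mB PB).
  by rewrite lee_fin lerD2l lerN2 union_level_le //; case/andP: epsilon01.
move=> w0 Ew0 j f Gf.
apply: (emp_inner_le_of_ball X (HG j) (HN j) (w_gt0 j) (lambda_tuning_psi_ge0 j) _ f Gf).
move=> g Gg; case: (HB j) => _ _; apply => // Bj; apply: Ew0.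
by rewrite (bigD1 j) //=; left.
Qed.

End NoiseEvent.

Theorem theorem1
  (R : realType) (dT : measure_display) (T : measurableType dT)
  (P : probability T R)
  (n d p : nat) (X : 'I_n -> 'rV[R]_d)                 (* fixed design *)
  (gstar : 'rV[R]_d -> R)                               (* arbitrary g* *)
  (eps : 'I_n -> T -> R)                                (* noise *)
  (J : 'I_p -> {set 'I_d})                              (* coordinates x^(j) *)
  (G : 'I_p -> set ('rV[R]_d -> R))                     (* spaces G_j *)
  (Fn : 'I_p -> ('rV[R]_d -> R) -> R)                   (* semi-norms ||.||_{F,j} *)
  (D0 D1 C1 : R) (psi : 'I_p -> R -> R)
  (epsilon : R) (w : 'I_p -> R) (A0 : R)
  (S : {set 'I_p}) (kappa0 xi0 : R)
  (gbar : 'I_p -> 'rV[R]_d -> R) :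
  (0 < n)%N ->
  (* structure of the model *)
  (forall j, fun_subspace (G j)) ->
  (forall j f, G j f -> depends_only_on (J j) f) ->
  (forall j, seminorm_on (G j) (Fn j)) ->
  (* sub-Gaussian noise condition *)
  (forall i, measurable_fun setT (eps i)) ->
  mutually_independent P eps ->
  (forall i, (\int[P]_w0 (eps i w0)%:E = 0)%E) ->
  0 < D0 -> 0 < D1 ->
  (forall i, (D0%:E * \int[P]_w0 (expR (eps i w0 ^+ 2 / D0))%:E <= D1%:E)%E) ->
  (* the constant C1 of the maximal inequality (outer-probability reading) *)
  0 < C1 ->
  (forall (delta : R) (F : set ('rV[R]_d -> R)) (ps t : R),
      0 < delta ->
      (forall f, F f -> emp_norm X f <= delta) ->
      (entropy_integral X delta F <= ps%:E)%E ->
      0 < t ->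
      exists B : set T, measurable B /\
        [set w0 | exists2 f, F f &
           C1 * ((Num.sqrt n%:R)^-1 * ps + delta * Num.sqrt (t / n%:R))
             < `|emp_inner X (fun i => eps i w0) f| ] `<=` B /\
        (P B <= (expR (- t))%:E)%E) ->
  (* entropy condition *)
  (forall j (delta : R), 0 < delta <= 1 ->
     (entropy_integral X delta (G_delta X (G j) (Fn j) delta)
       <= (psi j delta)%:E)%E) ->
  (* tuning constants *)
  0 < epsilon < 1 ->
  (forall j, 0 < w j <= 1) ->
  1 < A0 ->
  (* compatibility condition *)
  0 < kappa0 -> 1 < xi0 ->
  let gamma := fun j => (Num.sqrt n%:R)^-1 * psi j (w j) / w j in
  let lam := fun j => C1 * (gamma j + Num.sqrt (ln (p%:R / epsilon) / n%:R)) in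
  let rho := fun j => lam j * w j in
  (forall f : 'I_p -> 'rV[R]_d -> R, (forall j, G j (f j)) ->
     \sum_(j < p) lam j * w j * Fn j (f j)
       + \sum_(j < p | j \notin S) lam j * emp_norm X (f j)
       <= xi0 * \sum_(j < p | j \in S) lam j * emp_norm X (f j) ->
     kappa0 ^+ 2 * (\sum_(j < p | j \in S) lam j * emp_norm X (f j)) ^+ 2
       <= (\sum_(j < p | j \in S) lam j ^+ 2) * emp_norm X (gsum f) ^+ 2) ->
  (* the target gbar *)
  (forall j, G j (gbar j)) ->
  (xi0 + 1) / (xi0 - 1) < A0 ->
  let xi1 := 1 - 2 * A0 / ((xi0 + 1) * (A0 - 1)) in
  let xi2 := (xi0 + 1) * (A0 - 1) in
  exists E : set T, measurable E /\ ((1 - epsilon)%:E <= P E)%E /\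
    forall w0, E w0 ->
    let Y := fun i => gstar (X i) + eps i w0 in
    let Kn := fun gs : 'I_p -> 'rV[R]_d -> R =>
      emp_sq_res X Y (gsum gs) / 2 + A0 * penalty X rho lam Fn gs in
    forall ghat : 'I_p -> 'rV[R]_d -> R,
      (forall j, G j (ghat j)) ->
      (forall gs, (forall j, G j (gs j)) -> Kn ghat <= Kn gs) ->
      emp_norm X (fun x => gsum ghat x - gstar x) ^+ 2 / 2
        + emp_norm X (fun x => gsum ghat x - gsum gbar x) ^+ 2 / 2
        + (A0 - 1) * penalty X rho lam Fn (fun j x => ghat j x - gbar j x)
      <= xi1^-1 *
           (emp_norm X (fun x => gsum gbar x - gstar x) ^+ 2 / 2
            + 2 * A0 * (\sum_(j < p) rho j * Fn j (gbar j)
                        + \sum_(j < p | j \notin S) lam j * emp_norm X (gbar j)))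
         + 2 * xi2 ^+ 2 * kappa0 ^- 2 * (\sum_(j < p | j \in S) lam j ^+ 2).
Proof.
(* The sub-Gaussian and independence assumptions enter only through the maximal
   inequality for [C1]. *)
move=> n_gt0 HG _ HN _ _ _ _ _ _ C1_gt0 maxineq entropy_bound epsilon01 w01 A0_gt1
  kappa0_gt0 xi0_gt1 gamma lam rho compat Gbar A0_big xi1 xi2.
have [E [mE PE noise]] :=
  noise_event P X eps n_gt0 HG HN C1_gt0 maxineq entropy_bound epsilon01 w01.
have lam0 j : 0 <= lam j := lambda_tuning_psi_ge0 X C1_gt0 entropy_bound w01 j.
have rho0 j : 0 <= rho j by rewrite mulr_ge0 // ltW //; case/andP: (w01 j).
exists E; split=> //; split=> // w0 Ew0 Y Kn ghat Ghat Kmin.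
exact: (oracle_inequality X HG HN rho0 lam0 A0_gt1 xi0_gt1 A0_big kappa0_gt0
  (noise w0 Ew0) compat Gbar Ghat Kmin).
Qed.
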